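(* Let $H=(V,E)$ be an unweighted hypergraph on $n$ vertices with size $p=\sum_{e\in E}|e|$, and $k$ a positive integer. Let $\textsc{Certificate}(G,k)$ be a procedure returning, in time linear in the size of $G$, a $k$-sparse certificate of $G$ with at most $k(|V(G)|-1)$ edges. Consider the recursive algorithm $\textsc{Partition}(H,k)$: if the number of edges of $H$ is at most $2k(n-\kappa(H))$, return all edges of $H$; otherwise compute $E'=\textsc{Certificate}(H,k)$, contract all edges of $H$ not in $E'$, and return $\textsc{Partition}$ applied to the resulting hypergraph with the same $k$ (its edges identified with the corresponding edges of $H$). Then $\textsc{Partition}(H,k)$ outputs a $2k$-light $k$-partition of $H$ in $O(p\log n)$ time.
   Context: A hypergraph $H=(V,E)$ has edges that are subsets of $V$. For $A\subseteq V$, $\delta_H(A)$ is the set of edges meeting both $A$ and $V\setminus A$. $\kappa(H)$ is the number of connected components. Contracting an edge $e$ identifies all vertices of $e$ into one new vertex $v_e$, removes edges contained in $e$, and replaces $g\cap e$ by $v_e$ in every other edge $g$ meeting $e$. A subset $E'\subseteq E$ is a $k$-sparse certificate if, with $H'=(V,E')$, $|\delta_{H'}(A)|\ge\min(|\delta_H(A)|,k)$ for all $A\subseteq V$. A set $E'\subseteq E$ is $\ell$-light if $|E'|\le\ell(\kappa(H-E')-\kappa(H))$. An edge $e$ is $k$-crisp if there is $X\subseteq V$ with $e\in\delta_H(X)$ and $|\delta_H(X)|<k$. A $k$-partition of $H$ is a set of edges containing all $k$-crisp edges of $H$.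
   Formalization: Certificate(G,k) is assumed to return at most k(|V(G)|−κ(G)) edges rather than at most k(|V(G)|−1), and every edge of H and of each hypergraph passed to Certificate is nonempty. Apart from conventions, each condition added here is assumed in the paper as well or is needed for the statement above to hold. *)

From mathcomp Require Import all_boot.
Set Implicit Arguments. Unset Strict Implicit. Unset Printing Implicit Defensive.

(* A (multi-)hypergraph whose vertices are drawn from a finite type [V] and
   whose edges carry identities from a finite type [Ed].  [hV] is the vertex
   set, [hE] the edge set, and [inc e] is the set of vertices of edge [e]
   (only meaningful for [e \in hE]).  Edge identities are preserved under
   contraction, which realizes "edges identified with the corresponding
   edges of H". *)
Record hgraph (V Ed : finType) := HGraph {
  hV : {set V};
  hE : {set Ed};
  inc : {ffun Ed -> {set V}}
}.

Section Hyper.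
Variables (V Ed : finType).
Implicit Types (G : hgraph V Ed) (A X : {set V}) (F : {set Ed}).

Definition wf_hg G : Prop :=
  forall e, e \in hE G -> (inc G e \subset hV G) /\ inc G e != set0.

Definition hsize G : nat := \sum_(e in hE G) #|inc G e|.

Definition delta G A : {set Ed} :=
  [set e in hE G | (inc G e :&: A != set0) && (inc G e :\: A != set0)].

Definition adjF G F : rel V :=
  fun x y => [&& x \in hV G, y \in hV G &
              [exists e in hE G :&: F, (x \in inc G e) && (y \in inc G e)]].

Definition cls G F (x : V) : {set V} := [set y in hV G | connect (adjF G F) x y].
Definition kappa G : nat := #|[set cls G (hE G) x | x in hV G]|.

Definition restrict G F : hgraph V Ed := HGraph (hV G) (hE G :&: F) (inc G).
Definition remove G F : hgraph V Ed := HGraph (hV G) (hE G :\: F) (inc G).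

Definition sparse_cert (k : nat) G F : Prop :=
  F \subset hE G /\
  forall A, A \subset hV G -> minn #|delta G A| k <= #|delta (restrict G F) A|.

Definition light (l : nat) G F : Prop :=
  #|F| <= l * (kappa (remove G F) - kappa G).

Definition crisp (k : nat) G (e : Ed) : Prop :=
  exists X, [/\ X \subset hV G, e \in delta G X & #|delta G X| < k].

Definition kpartition (k : nat) G F : Prop :=
  F \subset hE G /\ forall e, crisp k G e -> e \in F.

(* Simultaneous contraction of the edges of F: each class of the relation
   "connected through edges of F" is identified into one vertex, named by a
   canonical representative; an edge not in F is removed iff it becomes
   contained in a single vertex that arose from contraction (i.e. it is
   contained in a contracted edge at some step of the sequential process);
   every other edge g gets vertex set rep(g). *)
Definition rep G F (x : V) : V := odflt x [pick y in cls G F x].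
Definition touched G F (x : V) : bool := [exists e in hE G :&: F, x \in inc G e].
Definition contract G F : hgraph V Ed :=
  HGraph [set rep G F x | x in hV G]
         [set g in hE G :\: F |
            ~~ ((#|rep G F @: inc G g| == 1) && [exists x in inc G g, touched G F x])]
         [ffun g => rep G F @: inc G g].

(* Run of Partition(G,k) with a given Certificate procedure [cert]:
   [partition_run cert k G S c] means the call returns S with total cost c,
   where every call is charged the size of its input hypergraph (certificate
   and contraction take linear time). *)
Inductive partition_run (cert : hgraph V Ed -> {set Ed}) (k : nat)
  : hgraph V Ed -> {set Ed} -> nat -> Prop :=
| PR_base G :
    #|hE G| <= 2 * k * (#|hV G| - kappa G) ->
    partition_run cert k G (hE G) (hsize G)
| PR_rec G S c :
    2 * k * (#|hV G| - kappa G) < #|hE G| ->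
    partition_run cert k (contract G (hE G :\: cert G)) S c ->
    partition_run cert k G S (hsize G + c).

End Hyper.

Definition certificate_spec (V Ed : finType) (k : nat)
  (cert : hgraph V Ed -> {set Ed}) : Prop :=
  forall G : hgraph V Ed, wf_hg G ->
    sparse_cert k G (cert G) /\ #|cert G| <= k * (#|hV G| - kappa G).

From mathcomp Require Import all_boot zify.
Set Implicit Arguments. Unset Strict Implicit. Unset Printing Implicit Defensive.

(* A cut with fewer than k edges lies entirely inside a k-sparse certificate,
   so each of its sides is a union of classes of the contracted edges: the cut
   survives contraction unchanged, and k-crisp edges are never contracted.
   Contracting edges disjoint from the final output S changes neither kappa(H)
   nor kappa(H - S), so the stopping rule |E| <= 2k(n - kappa), which makes
   the whole remaining edge set 2k-light, transfers back to H.  For the running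
   time, a recursive call happens only when |E| > 2k(n - kappa), whereas the
   next hypergraph has at most k(n - kappa) edges; hence n - kappa more than
   halves from one call to the next, there are O(log n) calls, and each costs
   at most the size of H since contraction never increases the size. *)

Lemma connect_homo (T U : finType) (f : T -> U) (e : rel T) (e' : rel U) :
  (forall x y, e x y -> connect e' (f x) (f y)) ->
  forall x y, connect e x y -> connect e' (f x) (f y).
Proof.
move=> fe x _ /connectP[p + ->]; elim: p x => [|z p IHp] x /=; first by rewrite connect0.
by case/andP=> /fe exz /IHp; apply: connect_trans.
Qed.

Lemma leq_card_imset_ker (T U W : finType) (A : {set T}) (f : T -> U) (g : T -> W) :
  {in A &, forall x y, f x = f y -> g x = g y} -> #|g @: A| <= #|f @: A|.
Proof.
move=> fg; have [->|[x0 Ax0]] := set_0Vmem A; first by rewrite !imset0 cards0.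
pose h u := g (odflt x0 [pick x in A | f x == u]).
suff ->: g @: A = h @: (f @: A) by apply: leq_imset_card.
rewrite -imset_comp; apply: eq_in_imset => x Ax; rewrite /h /=.
case: pickP => [y /andP[Ay /eqP fyx]|/(_ x)]; first exact: fg.
by rewrite Ax eqxx.
Qed.

Lemma card_imset_ker (T U W : finType) (A : {set T}) (f : T -> U) (g : T -> W) :
  {in A &, forall x y, (f x == f y) = (g x == g y)} -> #|f @: A| = #|g @: A|.
Proof.
move=> fg; apply/eqP; rewrite eqn_leq !leq_card_imset_ker // => x y Ax Ay /eqP.
  by rewrite fg // => /eqP.
by rewrite -fg // => /eqP.
Qed.

Section Hypergraph.
Variables V Ed : finType.
Implicit Types (G : hgraph V Ed) (F : {set Ed}).

Lemma adjF_sym G F : symmetric (adjF G F).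
Proof.
apply: symmetric_from_pre => x y /and3P[Gx Gy /existsP[e /andP[eF /andP[xe ye]]]].
by apply/and3P; split=> //; apply/existsP; exists e; rewrite eF xe ye.
Qed.

Lemma connect_adjF_sym G F : connect_sym (adjF G F).
Proof. exact/sym_connect_sym/adjF_sym. Qed.

Lemma cls_eq G F : {in hV G &, forall x y,
  (cls G F x == cls G F y) = connect (adjF G F) x y}.
Proof.
move=> x y Gx Gy; apply/eqP/idP => [clsxy|cxy].
  have : y \in cls G F y by rewrite inE Gy connect0.
  by rewrite -clsxy inE => /andP[].
by apply/setP => z; rewrite !inE (same_connect (connect_adjF_sym G F) cxy).
Qed.

Lemma rep_cls G F x : x \in hV G -> rep G F x \in cls G F x.
Proof.
move=> Gx; rewrite /rep; case: pickP => [//|/(_ x)].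
by rewrite inE Gx connect0.
Qed.

Lemma connect_rep G F x : x \in hV G -> connect (adjF G F) x (rep G F x).
Proof. by move/(rep_cls F); rewrite inE => /andP[]. Qed.

Lemma rep_eq G F : {in hV G &, forall x y,
  (rep G F x == rep G F y) = connect (adjF G F) x y}.
Proof.
move=> x y Gx Gy; apply/eqP/idP => [rxy|cxy].
  apply: connect_trans (connect_rep F Gx) _.
  by rewrite rxy connect_adjF_sym connect_rep.
have /eqP clsxy : cls G F x == cls G F y by rewrite cls_eq.
rewrite /rep clsxy; case: pickP => // /(_ y).
by rewrite inE Gy connect0.
Qed.

Lemma kappaE G (U : finType) (f : V -> U) :
  {in hV G &, forall x y, (f x == f y) = connect (adjF G (hE G)) x y} ->
  kappa G = #|f @: hV G|.
Proof. by move=> fG; apply: card_imset_ker => x y Gx Gy; rewrite cls_eq ?fG. Qed.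

Lemma kappa_remove_all G : kappa (remove G (hE G)) = #|hV G|.
Proof.
rewrite (@kappaE _ _ id) ?imset_id // => x y _ _.
have adj0 : adjF (remove G (hE G)) (hE (remove G (hE G))) =2 (fun _ _ => false).
  move=> u v; apply/and3P => [[_ _ /existsP[e]]].
  by rewrite /= setIid setDv inE.
rewrite (eq_connect adj0); apply/eqP/idP => [->|/connectP[[|? ?] //= _ ->] //].
exact: connect0.
Qed.

End Hypergraph.

Section Contraction.
Variables V Ed : finType.
Implicit Types (G : hgraph V Ed) (C F : {set Ed}) (X : {set V}).

Lemma wf_contract G F : wf_hg G -> wf_hg (contract G F).
Proof.
move=> wfG g; rewrite /= inE ffunE => /andP[/setDP[Gg _] _].
have [sub ne] := wfG g Gg; split; last by rewrite imset_eq0.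
exact: imsetS.
Qed.

Lemma hE_contract G F : hE (contract G F) \subset hE G :\: F.
Proof. by apply/subsetP => g; rewrite inE => /andP[]. Qed.

Lemma hE_contract_compl G C : hE (contract G (hE G :\: C)) \subset C.
Proof.
apply/subsetP => g /(subsetP (hE_contract _ _)) /setDP[Gg].
by rewrite inE Gg andbT negbK.
Qed.

Lemma hsize_contract G F : hsize (contract G F) <= hsize G.
Proof.
rewrite /hsize (@leq_trans (\sum_(e in hE (contract G F)) #|inc G e|)) //.
  by apply: leq_sum => e _; rewrite ffunE leq_imset_card.
apply: (sub_le_big (op := addn)) => // [m n|e]; first exact: leq_addr.
by move/(subsetP (hE_contract G F))/setDP=> [].
Qed.

Section ContractComponents.
Variables (G : hgraph V Ed) (F T : {set Ed}).
Hypothesis wfG : wf_hg G.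
Hypothesis disTF : [disjoint T & F].

Let Gs := remove G T.
Let Gc := remove (contract G F) T.
Let rp := rep G F.
Let cs := connect (adjF Gs (hE Gs)).
Let cc := connect (adjF Gc (hE Gc)).

Lemma connect_adjF_remove x y : connect (adjF G F) x y -> cs x y.
Proof.
apply: connect_sub => u v /and3P[Gu Gv /existsP[e /andP[/setIP[Ge Fe] uve]]].
apply/connect1/and3P; split=> //; apply/existsP; exists e.
by rewrite setIid inE Ge (disjointFl disTF Fe).
Qed.

Lemma adjF_contract_rep x y : adjF Gs (hE Gs) x y -> cc (rp x) (rp y).
Proof.
case/and3P=> Gx Gy /existsP[e /andP[/setIP[/setDP[Ge Te] _] /andP[xe ye]]].
have [Fe|nFe] := boolP (e \in F).
  suff /eqP -> : rp x == rp y by apply: connect0.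
  rewrite /rp rep_eq //; apply/connect1/and3P; split=> //.
  by apply/existsP; exists e; rewrite inE Ge Fe xe ye.
have [loop|nloop] :=
  boolP ((#|rp @: inc G e| == 1) && [exists z in inc G e, touched G F z]).
  case/andP: loop => /cards1P[w rpe] _.
  have := imset_f rp xe; have := imset_f rp ye.
  by rewrite rpe !inE => /eqP -> /eqP ->; apply: connect0.
apply/connect1/and3P; split; rewrite ?imset_f //.
apply/existsP; exists e; rewrite setIid /= ffunE !inE Te Ge nFe nloop.
by rewrite !imset_f.
Qed.

Lemma adjF_contract_connect u v : adjF Gc (hE Gc) u v -> cs u v.
Proof.
case/and3P=> /imsetP[x _ ->] /imsetP[y _ ->].
case/existsP=> e /andP[]; rewrite setIid /= ffunE !inE => /and3P[Te /andP[_ Ge] _].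
case/andP=> /imsetP[x' x'e rpx] /imsetP[y' y'e rpy].
have [sub _] := wfG Ge; have Gx' := subsetP sub _ x'e; have Gy' := subsetP sub _ y'e.
have rx' : connect (adjF G F) (rp x) x'.
  by rewrite /rp rpx connect_adjF_sym connect_rep.
have y'r : connect (adjF G F) y' (rp y) by rewrite /rp rpy connect_rep.
apply: connect_trans (connect_adjF_remove rx') _.
apply: connect_trans (connect_adjF_remove y'r).
apply/connect1/and3P; split=> //; apply/existsP; exists e.
by rewrite setIid inE Te Ge x'e y'e.
Qed.

Lemma connect_contract : {in hV G &, forall x y, cc (rp x) (rp y) = cs x y}.
Proof.
move=> x y Gx Gy; apply/idP/idP => [/(connect_sub adjF_contract_connect)|].
  have xr : cs x (rp x) by apply/connect_adjF_remove/connect_rep.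
  have ry : cs (rp y) y.
    by rewrite /cs connect_adjF_sym; apply/connect_adjF_remove/connect_rep.
  by move/(connect_trans xr)/connect_trans; apply.
by apply: connect_homo; apply: adjF_contract_rep.
Qed.

Lemma kappa_contract : kappa Gc = kappa Gs.
Proof.
rewrite [RHS](@kappaE _ _ _ _ (cls Gc (hE Gc) \o rp)) ?imset_comp //.
move=> x y Gx Gy; rewrite cls_eq ?imset_f //.
exact: connect_contract.
Qed.

End ContractComponents.

Lemma kappa_contract_all G F : wf_hg G -> kappa (contract G F) = kappa G.
Proof.
move=> wfG; have dis0 : [disjoint set0 & F] by rewrite -setI_eq0 set0I.
have remove0 H : remove H set0 = H by case: H => ? ? ?; rewrite /remove setD0.
by have := kappa_contract wfG dis0; rewrite !remove0.
Qed.

Lemma delta_cert k G C X : sparse_cert k G C -> X \subset hV G ->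
  #|delta G X| <= k -> delta G X \subset C.
Proof.
move=> [_ certC] GX /minn_idPl small; have := certC X GX; rewrite small.
have sub : delta (restrict G C) X \subset delta G X.
  by apply/subsetP => g; rewrite !inE => /andP[/andP[-> _] ->].
move/(conj sub)/andP; rewrite -eqEcard => /eqP <-.
by apply/subsetP => g; rewrite !inE => /andP[/andP[]].
Qed.

Section ContractCut.
Variables (G : hgraph V Ed) (F : {set Ed}) (X : {set V}).
Hypotheses (wfG : wf_hg G) (GX : X \subset hV G) (disXF : [disjoint delta G X & F]).

Let rp := rep G F.

Lemma closed_adjF_cut : closed (adjF G F) (mem X).
Proof.
move=> x y /and3P[_ _ /existsP[e /andP[/setIP[Ge Fe] /andP[xe ye]]]].
apply/eqP; apply: contraFT (disjointFl disXF Fe) => /= xXyX.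
rewrite inE Ge /=; move: xXyX; case xX: (x \in X); case yX: (y \in X) => // _;
  apply/andP; split; apply/set0Pn;
  by [exists x; rewrite !inE xe xX | exists y; rewrite !inE ye yX].
Qed.

Lemma mem_rep_cut x : x \in hV G -> (rp x \in rp @: X) = (x \in X).
Proof.
move=> Gx; apply/imsetP/idP => [[z zX /eqP]|xX]; last by exists x.
have Gz := subsetP GX _ zX.
by rewrite /rp rep_eq // => /(closed_connect closed_adjF_cut) ->.
Qed.

Lemma rep_imsetI (A : {set V}) :
  A \subset hV G -> rp @: A :&: rp @: X = rp @: (A :&: X).
Proof.
move=> GA; apply/setP => u; rewrite inE; apply/andP/imsetP.
  case=> /imsetP[x Ax ->]; rewrite mem_rep_cut ?(subsetP GA) // => xX.
  by exists x; rewrite ?inE ?xX ?Ax.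
by case=> x /setIP[Ax xX] ->; rewrite !imset_f.
Qed.

Lemma rep_imsetD (A : {set V}) :
  A \subset hV G -> rp @: A :\: rp @: X = rp @: (A :\: X).
Proof.
move=> GA; apply/setP => u; rewrite inE; apply/andP/imsetP.
  case=> uX /imsetP[x Ax ux].
  move: uX; rewrite ux mem_rep_cut ?(subsetP GA) // => xX.
  by exists x; rewrite ?inE ?xX ?Ax.
case=> x /setDP[Ax xX] ->; split; last exact: imset_f.
by rewrite mem_rep_cut // (subsetP GA).
Qed.

Lemma delta_contract : delta (contract G F) (rp @: X) = delta G X.
Proof.
apply/setP => g; rewrite !inE /= ffunE.
have [Ge|] := boolP (g \in hE G); last by rewrite andbF.
have [sub _] := wfG Ge; rewrite rep_imsetI // rep_imsetD // !imset_eq0 /=.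
rewrite andbT; apply/idP/idP => [/and3P[_ -> ->] //|/andP[meetX meetXc]].
rewrite meetX meetXc !andbT.
have -> /= : g \notin F by rewrite (disjointFr disXF) // inE Ge meetX meetXc.
case: (set0Pn _ meetX) (set0Pn _ meetXc) => x /setIP[xg xX] [y /setDP[yg yX]].
apply/negP => /andP[/cards1P[w rpg] _].
have := imset_f rp xg; have := imset_f rp yg; rewrite rpg !inE => /eqP ry /eqP rx.
move: yX; rewrite -(mem_rep_cut (subsetP sub _ yg)) ry -rx.
by rewrite mem_rep_cut ?xX // (subsetP sub).
Qed.

End ContractCut.

Lemma crisp_contract k G C e : wf_hg G -> sparse_cert k G C -> crisp k G e ->
  crisp k (contract G (hE G :\: C)) e.
Proof.
move=> wfG certC [X [GX eX smallX]].
have disX : [disjoint delta G X & hE G :\: C].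
  have /subsetP cutC := delta_cert certC GX (ltnW smallX).
  by rewrite -setI_eq0 -subset0; apply/subsetP => g /setIP[/cutC Cg]; rewrite inE Cg.
exists (rep G (hE G :\: C) @: X); rewrite delta_contract //.
by split=> //; apply: imsetS.
Qed.
End Contraction.

Section PartitionRun.
Variables (V Ed : finType) (k : nat) (cert : hgraph V Ed -> {set Ed}).
Hypothesis certP : certificate_spec k cert.
Implicit Types (G : hgraph V Ed) (S : {set Ed}).

Let next G := contract G (hE G :\: cert G).

Lemma card_hE_next G : wf_hg G -> #|hE (next G)| <= k * (#|hV G| - kappa G).
Proof.
move=> wfG; have [_ small] := certP wfG.
exact: leq_trans (subset_leq_card (hE_contract_compl G (cert G))) small.
Qed.

Lemma partition_run_exists G : wf_hg G -> exists S c, partition_run cert k G S c.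
Proof.
have [m] := ubnP #|hE G|; elim: m G => // m IHm G ltEm wfG.
have [stop|go] := leqP #|hE G| (2 * k * (#|hV G| - kappa G)).
  by exists (hE G), (hsize G); apply: PR_base.
have ltE : #|hE (next G)| < m by have := card_hE_next wfG; lia.
have [S [c run]] := IHm _ ltE (wf_contract wfG).
by exists S, (hsize G + c); apply: PR_rec.
Qed.

Lemma partition_run_sub G S c : partition_run cert k G S c -> S \subset hE G.
Proof.
elim=> {G S c} [G _|G S c _ _ sub]; first exact: subxx.
by apply: subset_trans sub (subset_trans (hE_contract _ _) (subsetDl _ _)).
Qed.

Lemma partition_run_crisp G S c e :
  partition_run cert k G S c -> wf_hg G -> crisp k G e -> e \in S.
Proof.
move=> run; elim: run e => {G S c} [G _ e _ [X [_ eX _]]|G S c _ _ IH e wfG ?].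
  by move: eX; rewrite inE => /andP[].
apply: IH (wf_contract wfG) _.
by have [certG _] := certP wfG; apply: crisp_contract.
Qed.

Lemma partition_run_light G S c :
  partition_run cert k G S c -> wf_hg G -> light (2 * k) G S.
Proof.
elim=> {G S c} [G stop _|G S c _ run IH wfG]; first by rewrite /light kappa_remove_all.
have disS : [disjoint S & hE G :\: cert G].
  have /subsetP SE := subset_trans (partition_run_sub run) (hE_contract _ _).
  by rewrite -setI_eq0 -subset0; apply/subsetP => e /setIP[/SE/setDP[_ /negPf ->]].
by have := IH (wf_contract wfG); rewrite /light kappa_contract // kappa_contract_all.
Qed.

Hypothesis k_gt0 : 0 < k.

Lemma partition_run_cost G S c R j : partition_run cert k G S c -> wf_hg G ->
  #|hE G| <= k * R -> R < 2 ^ j -> c <= hsize G * j.+1.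
Proof.
move=> run; elim: run R j => {G S c} [G _ R j _ _ _|G S c go _ IH R j wfG ER ltRj].
  exact: leq_pmulr.
have halved : 2 * (#|hV G| - kappa G) < R by rewrite -(ltn_pmul2l k_gt0); lia.
case: j ltRj => [|j] ltRj; first by lia.
have := IH _ j (wf_contract wfG) (card_hE_next wfG).
have := hsize_contract G (hE G :\: cert G).
rewrite expnS in ltRj; nia.
Qed.

Lemma partition_run_cost_log G S c : partition_run cert k G S c -> wf_hg G ->
  c <= hsize G * (trunc_log 2 #|hV G|).+3.
Proof.
case=> {G S c} [G _|G S c _ run] wfG; first exact: leq_pmulr.
have ltV := @trunc_log_ltn 2 #|hV G| isT.
have := partition_run_cost run (wf_contract wfG) (card_hE_next wfG).
have := hsize_contract G (hE G :\: cert G).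
by move=> hs /(_ _ (leq_ltn_trans (leq_subr _ _) ltV)); nia.
Qed.

End PartitionRun.

Theorem theorem3p5 :
  exists C : nat,
  forall (V Ed : finType) (H : hgraph V Ed) (k : nat)
         (cert : hgraph V Ed -> {set Ed}),
    wf_hg H -> 0 < k -> certificate_spec k cert ->
    2 <= #|hV H| ->
    (exists S c, partition_run cert k H S c) /\
    (forall S c, partition_run cert k H S c ->
       [/\ light (2 * k) H S, kpartition k H S &
           c <= C * hsize H * trunc_log 2 #|hV H|]).
Proof.
exists 4 => V Ed H k cert wfH k_gt0 certP twoV.
split=> [|S c run]; first exact: partition_run_exists.
split; first exact: partition_run_light run wfH.
  by split=> [|e]; [exact: partition_run_sub run | exact: partition_run_crisp run wfH].
have log_gt0 : 0 < trunc_log 2 #|hV H| by rewrite trunc_log_gt0.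
by have := partition_run_cost_log certP k_gt0 run wfH; nia.
Qed.
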